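(* Fix $0<\alpha<1$ and $0<p_1<\frac12<p_2<1$, and suppose $(1-\alpha)(1-p_1)+\alpha(1-p_2)>\frac12$. For each $d\ge1$ let $\mu_d$ be the distribution on $Q_d$ given by \[ \mu_d(X)=(1-\alpha)p_1^{|X|}(1-p_1)^{d-|X|}+\alpha\,p_2^{|X|}(1-p_2)^{d-|X|}. \] (Then $w_i^0=(1-\alpha)(1-p_1)+\alpha(1-p_2)>\frac12$ for every $i$, so the majority point is $\mathbf 0$.) For every $d\ge1$, under $\mu_d$ at least one of the following holds: (a) $\mathbf 0$ is a best response to $\mathbf 0$, and hence $(\mathbf 0,\mathbf 0)$ is an equilibrium; (b) $\mathbf 1$ is a best response to $\mathbf 0$. Moreover, $P_1(\mathbf 1,\mathbf 0)\to\alpha$ as $d\to\infty$; in particular, if $\alpha>\frac12$ then for all sufficiently large $d$, $P_1(\mathbf 1,\mathbf 0)>\frac12$, so $(\mathbf 0,\mathbf 0)$ is not an equilibrium and $\mathbf 1$ is a best response to $\mathbf 0$, while if $\alpha<\frac12$ then for all sufficiently large $d$, $(\mathbf 0,\mathbf 0)$ is an equilibrium.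
   Context: $Q_d=\{0,1\}^d$ with the Hamming distance $d(X,Y)=|\{i: x_i\neq y_i\}|$; $|X|$ is the number of coordinates equal to $1$. For a probability distribution $\mu$ on $Q_d$ (extended additively to subsets), and $A,B\in Q_d$, let $V(A,B)=\{Z: d(Z,A)<d(Z,B)\}$, $T(A,B)=\{Z: d(Z,A)=d(Z,B)\}$, $P_1(A,B)=\mu(V(A,B))+\frac12\mu(T(A,B))$, $P_2(A,B)=\mu(V(B,A))+\frac12\mu(T(A,B))$. $(A,B)$ is an equilibrium if $P_1(A,B)\ge P_1(A',B)$ for all $A'$ and $P_2(A,B)\ge P_2(A,B')$ for all $B'$. $X$ is a best response to $B$ if $P_1(X,B)\ge P_1(X',B)$ for all $X'\in Q_d$. $w_i^0=\mu(\{Z: z_i=0\})$. $\mathbf 0=(0,\dots,0)$, $\mathbf 1=(1,\dots,1)$. *)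

From HB Require Import structures.
From mathcomp Require Import all_boot all_order all_algebra.
From mathcomp Require Import all_classical all_reals all_analysis.
Set Implicit Arguments. Unset Strict Implicit. Unset Printing Implicit Defensive.
Import Order.TTheory GRing.Theory Num.Theory.
Local Open Scope ring_scope.

(* The hypercube Q_d = {0,1}^d : coordinate i is true iff x_i = 1. *)
Definition cube (d : nat) := {ffun 'I_d -> bool}.

Definition hdist d (X Y : cube d) : nat := #|[set i | X i != Y i]|.

Definition hweight d (X : cube d) : nat := #|[set i | X i]|.

Definition zero_pt d : cube d := [ffun _ => false].
Definition one_pt d : cube d := [ffun _ => true].

Section Game.
Variables (R : realType) (d : nat) (mu : cube d -> R).

Definition muS (S : {set cube d}) : R := \sum_(Z in S) mu Z.

Definition Vor (A B : cube d) : {set cube d} := [set Z | hdist Z A < hdist Z B]%N.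
Definition Tie (A B : cube d) : {set cube d} := [set Z | hdist Z A == hdist Z B].

Definition P1 (A B : cube d) : R := muS (Vor A B) + 2^-1 * muS (Tie A B).
Definition P2 (A B : cube d) : R := muS (Vor B A) + 2^-1 * muS (Tie A B).

Definition equilibrium (A B : cube d) : Prop :=
  (forall A' : cube d, P1 A' B <= P1 A B) /\ (forall B' : cube d, P2 A B' <= P2 A B).

Definition best_response (X B : cube d) : Prop :=
  forall X' : cube d, P1 X' B <= P1 X B.
End Game.

Definition mixture (R : realType) (a p1 p2 : R) (d : nat) (X : cube d) : R :=
  (1 - a) * p1 ^+ hweight X * (1 - p1) ^+ (d - hweight X)
  + a * p2 ^+ hweight X * (1 - p2) ^+ (d - hweight X).

From HB Require Import structures.
From mathcomp Require Import all_boot all_order all_algebra.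
From mathcomp Require Import all_classical all_reals all_analysis.
From mathcomp Require Import zify ring lra.
Import Order.TTheory GRing.Theory Num.Theory.
Import numFieldNormedType.Exports.
Local Open Scope ring_scope.
Set Implicit Arguments. Unset Strict Implicit. Unset Printing Implicit Defensive.

(* Against 0, the point X wins voter Z exactly when Z agrees with X on more than half of the
   |X| = k ones of X (a tie counts one half).  Under a Bernoulli(p) product measure, P1(X, 0) is
   therefore the probability g_p(k) that Bin(k, p) exceeds k/2, and under the mixture it is
   f(k) = (1 - a) g_p1(k) + a g_p2(k).  Conditioning on the first trials shows g_p(2m+2) = g_p(2m+1)
   and g_p(2m+1) - g_p(2m) = (p - 1/2) C(2m, m) (p(1-p))^m, so f(2m+2) - f(2m) has the sign of
   a (p2 - 1/2) (p2(1-p2))^m - (1 - a) (1/2 - p1) (p1(1-p1))^m.  The majority hypothesis says that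
   the second coefficient is the larger one, hence once this sign is nonnegative it stays so: f
   first decreases and then increases, so its maximum on [0, d] is attained at k = 0 or k = d.
   Finally g_p1(2m) <= (4 p1 (1-p1))^m and 1 - g_p2(2m) <= (4 p2 (1-p2))^m give f(d) -> a. *)

Section Cube.
Variable d : nat.
Implicit Types X Z : cube d.

Definition hinter Z X : nat := #|[set i | Z i && X i]|.

Lemma card_set_sum (P : pred 'I_d) : #|[set i | P i]| = (\sum_i P i)%N.
Proof. by rewrite -sum1_card big_mkcond; apply: eq_bigr => i _; rewrite inE. Qed.

Lemma hdist_hinter Z X : (hdist Z X + 2 * hinter Z X = hweight Z + hweight X)%N.
Proof.
rewrite /hdist /hinter /hweight !card_set_sum mul2n -addnn -!big_split /=.
by apply: eq_bigr => i _; case: (Z i); case: (X i).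
Qed.

Lemma hdist_zero Z : hdist Z (zero_pt d) = hweight Z.
Proof. by apply: eq_card => i; rewrite !inE ffunE; case: (Z i). Qed.

Lemma hinter_le Z X : (hinter Z X <= hweight X)%N.
Proof. by apply/subset_leq_card/fintype.subsetP => i; rewrite !inE => /andP[]. Qed.

Lemma hweight_le X : (hweight X <= d)%N.
Proof. by rewrite -[X in (_ <= X)%N](card_ord d) max_card. Qed.

Lemma hweight_zero : hweight (zero_pt d) = 0%N.
Proof. by apply/eqP; rewrite cards_eq0; apply/eqP/setP => i; rewrite !inE ffunE. Qed.

Lemma hweight_one : hweight (one_pt d) = d.
Proof. by rewrite -[RHS](card_ord d); apply: eq_card => i; rewrite !inE ffunE. Qed.
End Cube.

(* Share of voter Z won by X against 0 when |X| = k and |Z /\ X| = j: by [hdist_hinter],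
   d(Z, X) < d(Z, 0) iff k < 2 j. *)
Definition vote_share (R : unitRingType) (k j : nat) : R :=
  if (k < 2 * j)%N then 1 else if k == (2 * j)%N then 2^-1 else 0.

Section Payoff.
Variables (R : realType) (d : nat) (mu : cube d -> R).

Lemma P1_zeroE (X : cube d) :
  P1 mu X (zero_pt d) = \sum_Z mu Z * vote_share R (hweight X) (hinter Z X).
Proof.
rewrite /P1 /muS mulr_sumr (big_mkcond (mem (Vor _ _))) (big_mkcond (mem (Tie _ _))).
rewrite -big_split /=; apply: eq_bigr => Z _; rewrite !inE hdist_zero.
have hdistE := hdist_hinter Z X.
have -> : (hdist Z X < hweight Z)%N = (hweight X < 2 * hinter Z X)%N by apply/idP/idP; lia.
have -> : (hdist Z X == hweight Z) = (hweight X == 2 * hinter Z X)%N by apply/eqP/eqP; lia.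
by rewrite /vote_share; case: ifP => h1; case: ifP => h2; try lia; ring.
Qed.

Lemma P2_zero_left (B : cube d) : P2 mu (zero_pt d) B = P1 mu B (zero_pt d).
Proof. by rewrite /P2 /P1; congr (_ + _ * muS _ _); apply/setP => Z; rewrite !inE eq_sym. Qed.

Lemma best_response_equilibrium :
  best_response mu (zero_pt d) (zero_pt d) -> equilibrium mu (zero_pt d) (zero_pt d).
Proof. by move=> br; split=> // B; rewrite !P2_zero_left; apply: br. Qed.
End Payoff.

Section Binomial.
Variable R : comNzRingType.
Implicit Types p : R.

Lemma sum_ord_delta n e (F : nat -> R) :
  (e < n)%N -> \sum_(j < n) (j == e :> nat)%:R * F j = F e.
Proof.
move=> lt_en; rewrite (bigD1 (Ordinal lt_en)) //= eqxx mul1r big1 ?addr0 // => j ne_je.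
suff /negbTE -> : (j != e :> nat) by rewrite mul0r.
by apply: contra ne_je => /eqP je; apply/eqP/val_inj.
Qed.

Definition binom_pmf p (k j : nat) : R := 'C(k, j)%:R * (p ^+ j * (1 - p) ^+ (k - j)).

Lemma coef_binom_poly p k j : (((1 - p)%:P + p *: 'X) ^+ k)`_j = binom_pmf p k j.
Proof.
rewrite exprDn coef_sum (eq_bigr (fun i : 'I_k.+1 => (i == j :> nat)%:R * binom_pmf p k i));
  last by move=> i _; rewrite -polyC_exp exprZn mul_polyC scalerA coefMn coefZ coefXn
    -mulr_natl eq_sym /binom_pmf; ring.
have [lt_kj|le_jk] := ltnP k j; last by rewrite sum_ord_delta.
rewrite big1 /binom_pmf ?bin_small ?mul0r // => i _.
suff /negbTE -> : (i != j :> nat) by rewrite mul0r.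
by have := ltn_ord i; lia.
Qed.
End Binomial.

Section BernoulliCube.
Variables (R : comNzRingType) (d : nat) (p : R).

Definition bernoulli_cube (Z : cube d) : R := p ^+ hweight Z * (1 - p) ^+ (d - hweight Z).

Lemma bernoulli_cube_genpoly (X : cube d) :
  \sum_(Z : cube d) bernoulli_cube Z *: 'X^(hinter Z X) = ((1 - p)%:P + p *: 'X) ^+ hweight X.
Proof.
pose F (i : 'I_d) (b : bool) := (if b then p else 1 - p) *: ('X^(b && X i) : {poly R}).
have prodF : \prod_(i < d) \sum_(b : bool) F i b = ((1 - p)%:P + p *: 'X) ^+ hweight X.
  rewrite -prodr_const [RHS]big_mkcond /=; apply: eq_bigr => i _.
  rewrite big_bool /F inE /=; case: (X i) => /=.
    by rewrite expr1 expr0 addrC -alg_polyC.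
  by rewrite expr0 -scalerDl addrC subrK scale1r.
rewrite -prodF bigA_distr_bigA /=; apply: eq_bigr => Z _.
rewrite /F scaler_prod prodrXr; congr (_ *: 'X^_); last first.
  by rewrite /hinter card_set_sum; apply: eq_bigr => i _; case: (Z i).
rewrite (bigID (fun i => Z i)) /= (eq_bigr (fun _ => p)); last by move=> i ->.
rewrite [X in _ * X](eq_bigr (fun _ => 1 - p)); last by move=> i /negbTE ->.
rewrite !prodr_const /bernoulli_cube; congr (_ ^+ _ * _ ^+ _).
  by apply: eq_card => i; rewrite inE.
have := cardC [set i | Z i]; rewrite card_ord /hweight.
suff -> : #|[predC [set i | Z i]]| = #|(fun i => ~~ Z i)| by move=> sumd; rewrite -{1}sumd addKn.
by apply: eq_card => i; rewrite !inE.
Qed.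

Lemma sum_bernoulli_cube_hinter (X : cube d) (t : nat -> R) :
  \sum_(Z : cube d) bernoulli_cube Z * t (hinter Z X) =
  \sum_(j < (hweight X).+1) binom_pmf p (hweight X) j * t j.
Proof.
have pmfE j : binom_pmf p (hweight X) j = \sum_(Z : cube d) bernoulli_cube Z * (hinter Z X == j)%:R.
  rewrite -coef_binom_poly -bernoulli_cube_genpoly coef_sum; apply: eq_bigr => Z _.
  by rewrite coefZ coefXn eq_sym.
under [RHS]eq_bigr => j _ do rewrite pmfE mulr_suml.
rewrite exchange_big /=; apply: eq_bigr => Z _.
under eq_bigr => j _ do rewrite -mulrA eq_sym.
by rewrite -mulr_sumr sum_ord_delta // ltnS hinter_le.
Qed.
End BernoulliCube.

Section Majority.
Variable R : realFieldType.
Implicit Types p : R.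

Definition majority p (k : nat) : R :=
  \sum_(j < k.+1) binom_pmf p k j * vote_share R k j.

Lemma binom_pmfSS p k j :
  binom_pmf p k.+1 j.+1 = p * binom_pmf p k j + (1 - p) * binom_pmf p k j.+1.
Proof.
rewrite /binom_pmf binS natrD subSS.
have [lt_jk|le_kj] := ltnP j k.
  have -> : (k - j = (k - j.+1).+1)%N by lia.
  by rewrite !exprS; ring.
have -> : (k - j.+1 = 0)%N by lia.
by rewrite (bin_small (n := k)) ?ltnS // exprS; ring.
Qed.

Lemma binom_pmf_small p k j : (k < j)%N -> binom_pmf p k j = 0.
Proof. by move=> lt_kj; rewrite /binom_pmf bin_small // mul0r. Qed.

Lemma vote_share_S0 k : vote_share R k.+1 0 = 0.
Proof. by []. Qed.

(* Condition on the number j of successes among the first k trials. *)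
Lemma majorityS p k : majority p k.+1 - majority p k =
  \sum_(j < k.+1) binom_pmf p k j *
    (p * vote_share R k.+1 j.+1 + (1 - p) * vote_share R k.+1 j - vote_share R k j).
Proof.
have shift : \sum_(j < k.+1) binom_pmf p k j * vote_share R k.+1 j =
    \sum_(j < k.+1) binom_pmf p k j.+1 * vote_share R k.+1 j.+1.
  rewrite [LHS]big_ord_recl [RHS]big_ord_recr /= (binom_pmf_small _ (ltnSn k)) (vote_share_S0 k).
  by rewrite mulr0 mul0r add0r addr0; apply: eq_bigr => i _; rewrite /bump leq0n add1n.
rewrite /majority big_ord_recl vote_share_S0 mulr0 add0r.
under eq_bigr => j _ do rewrite lift0 binom_pmfSS mulrDl -[p * _ * _]mulrA -[(1 - p) * _ * _]mulrA.
rewrite big_split /= -[X in _ + X - _]mulr_sumr -shift mulr_sumr -big_split -sumrB.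
by apply: eq_bigr => j _ /=; ring.
Qed.

Lemma vote_share_even_jump p m j :
  p * vote_share R (2 * m).+1 j.+1 + (1 - p) * vote_share R (2 * m).+1 j
    - vote_share R (2 * m) j = (j == m)%:R * (p - 2^-1).
Proof.
rewrite /vote_share; case: (eqVneq j m) => [eq_jm|ne_jm] /=;
  repeat case: ifP => ?; rewrite ?mulr1n ?mulr0n //=; try (exfalso; lia); ring.
Qed.

Lemma vote_share_odd_jump p m j :
  p * vote_share R (2 * m).+2 j.+1 + (1 - p) * vote_share R (2 * m).+2 j
    - vote_share R (2 * m).+1 j = (j == m)%:R * (p / 2) - (j == m.+1)%:R * ((1 - p) / 2).
Proof.
rewrite /vote_share; case: (eqVneq j m) => [eq_jm|ne_jm];
  case: (eqVneq j m.+1) => [eq_jSm|ne_jSm] /=;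
  repeat case: ifP => ?; rewrite ?mulr1n ?mulr0n //=; try (exfalso; lia); lra.
Qed.

Lemma majority_odd p m :
  majority p (2 * m).+1 = majority p (2 * m) + (p - 2^-1) * binom_pmf p (2 * m) m.
Proof.
apply/eqP; rewrite addrC -subr_eq majorityS.
under eq_bigr => j _ do rewrite vote_share_even_jump mulrCA.
rewrite (sum_ord_delta (fun j => binom_pmf p (2 * m) j * (p - 2^-1))); last lia.
by rewrite mulrC.
Qed.

(* The boundary terms j = m and j = m.+1 cancel since 'C(2m+1, m) = 'C(2m+1, m+1). *)
Lemma majority_even p m : majority p (2 * m).+2 = majority p (2 * m).+1.
Proof.
apply/eqP; rewrite -subr_eq0 majorityS; apply/eqP.
under eq_bigr => j _ do rewrite vote_share_odd_jump mulrBr mulrCA [X in _ - X]mulrCA.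
rewrite sumrB (sum_ord_delta (fun j => binom_pmf p (2 * m).+1 j * (p / 2))); last lia.
rewrite (sum_ord_delta (fun j => binom_pmf p (2 * m).+1 j * ((1 - p) / 2))); last lia.
rewrite /binom_pmf.
have -> : 'C((2 * m).+1, m.+1) = 'C((2 * m).+1, m).
  by rewrite -bin_sub; [congr 'C(_, _) | ]; lia.
have -> : ((2 * m).+1 - m.+1 = m)%N by lia.
have -> : ((2 * m).+1 - m = m.+1)%N by lia.
by rewrite !exprS; ring.
Qed.
End Majority.

Section MajorityBounds.
Variable R : realFieldType.
Implicit Types p : R.

Lemma vote_share_ge0 k j : 0 <= vote_share R k j.
Proof. by rewrite /vote_share; repeat case: ifP => _; rewrite ?invr_ge0 ?ler0n. Qed.

Lemma vote_share_le1 k j : vote_share R k j <= 1.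
Proof. by rewrite /vote_share; repeat case: ifP => _; rewrite ?ler01 ?lexx // invf_le1; lra. Qed.

Lemma binom_pmf_ge0 p k j : 0 <= p <= 1 -> 0 <= binom_pmf p k j.
Proof. by case/andP=> p_ge0 p_le1; rewrite mulr_ge0 ?mulr_ge0 ?exprn_ge0 ?subr_ge0. Qed.

Lemma sum_binom_pmf p k : \sum_(j < k.+1) binom_pmf p k j = 1.
Proof.
rewrite -[RHS](expr1n _ k) -[1 in RHS](subrK p) exprDn.
by apply: eq_bigr => j _; rewrite /binom_pmf mulr_natl mulrC.
Qed.

Lemma majority_ge0 p k : 0 <= p <= 1 -> 0 <= majority p k.
Proof. by move=> p01; apply: sumr_ge0 => j _; rewrite mulr_ge0 ?binom_pmf_ge0 ?vote_share_ge0. Qed.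

Lemma majority_le1 p k : 0 <= p <= 1 -> majority p k <= 1.
Proof.
move=> p01; rewrite -(sum_binom_pmf p k); apply: ler_sum => j _.
by rewrite ler_piMr ?binom_pmf_ge0 ?vote_share_le1.
Qed.

Lemma sum_binom_const (x : R) m : \sum_(j < (2 * m).+1) 'C(2 * m, j)%:R * x ^+ m = (4 * x) ^+ m.
Proof.
rewrite -mulr_suml (_ : \sum_(j < _) _ = (1 + 1) ^+ (2 * m)).
  by rewrite exprM -exprMn; congr (_ ^+ _); rewrite expr2; ring.
by rewrite exprDn; apply: eq_bigr => j _; rewrite !expr1n mul1r.
Qed.

Lemma expr_unbalanced_le (x y : R) m t : 0 <= x <= y -> (t <= m)%N ->
  x ^+ (m + t) * y ^+ (m - t) <= (x * y) ^+ m.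
Proof.
case/andP=> x_ge0 le_xy le_tm; have y_ge0 := le_trans x_ge0 le_xy.
rewrite exprMn exprD.
have -> : y ^+ m = y ^+ t * y ^+ (m - t) by rewrite -exprD subnKC.
rewrite -mulrA ler_wpM2l ?exprn_ge0 // ler_wpM2r ?exprn_ge0 //.
by rewrite lerXn2r ?nnegrE.
Qed.

(* Each outcome with at least m successes out of 2m has probability at most (p(1-p))^m. *)
Lemma majority_even_le p m : 0 <= p <= 2^-1 -> majority p (2 * m) <= (4 * (p * (1 - p))) ^+ m.
Proof.
case/andP=> p_ge0 p_le; rewrite -sum_binom_const; apply: ler_sum => j _.
have lt_j := ltn_ord j.
have [lt_jm|le_mj] := ltnP j m.
  by rewrite /vote_share !ifF ?mulr0 ?mulr_ge0 ?exprn_ge0 ?ler0n //;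
    first (apply: mulr_ge0; lra); lia.
apply: le_trans (_ : binom_pmf p (2 * m) j <= _).
  by rewrite ler_piMr ?binom_pmf_ge0 ?vote_share_le1 //; lra.
rewrite /binom_pmf ler_wpM2l //.
have := @expr_unbalanced_le p (1 - p) m (j - m).
have -> : (m + (j - m) = j)%N by lia.
have -> : (m - (j - m) = 2 * m - j)%N by lia.
apply; [apply/andP; split; lra | lia].
Qed.

Lemma majority_even_ge p m : 2^-1 <= p <= 1 -> 1 - majority p (2 * m) <= (4 * (p * (1 - p))) ^+ m.
Proof.
case/andP=> p_ge p_le1; rewrite -sum_binom_const -[X in X - _](sum_binom_pmf p (2 * m)) -sumrB.
apply: ler_sum => j _; have lt_j := ltn_ord j.
rewrite -{1}[binom_pmf p _ _]mulr1 -mulrBr.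
have [lt_mj|le_jm] := ltnP m j.
  by rewrite /vote_share ifT ?subrr ?mulr0 ?mulr_ge0 ?exprn_ge0 ?ler0n //;
    first (apply: mulr_ge0; lra); lia.
apply: le_trans (_ : binom_pmf p (2 * m) j <= _).
  by rewrite ler_piMr ?binom_pmf_ge0 ?gerBl ?vote_share_ge0 //; apply/andP; split; lra.
rewrite /binom_pmf ler_wpM2l // mulrC [p * _]mulrC.
have := @expr_unbalanced_le (1 - p) p m (m - j).
have -> : (m + (m - j) = 2 * m - j)%N by lia.
have -> : (m - (m - j) = j)%N by lia.
apply; [apply/andP; split; lra | lia].
Qed.
End MajorityBounds.

Section Unimodal.
Variables (R : realDomainType) (s : nat -> R).
Hypothesis incr_persist : forall m, s m <= s m.+1 -> s m.+1 <= s m.+2.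

Lemma incr_persist_add j n : s j <= s j.+1 -> s (j + n) <= s (j + n).+1.
Proof. by move=> incr_j; elim: n => [|n IHn]; rewrite ?addn0 ?addnS //; apply: incr_persist. Qed.

Lemma valley_le_endpoints M m : (m <= M)%N -> s m <= s 0 \/ s m <= s M.
Proof.
elim: M m => [|M IHM] m le_mM; first by left; rewrite (_ : m = 0%N) //; lia.
have [incr_M|decr_M] := leP (s M) (s M.+1).
  have [->|ne_m] := eqVneq m M.+1; first by right.
  have [|le_m0|le_mM'] := IHM m; first lia; first by left.
  by right; apply: le_trans incr_M.
have decr j : (j <= M)%N -> s j.+1 < s j.
  move=> le_jM; rewrite ltNge; apply/negP => /(incr_persist_add (M - j)).
  by rewrite subnKC //; lra.
left; elim: m le_mM => // m IHm le_mM.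
by apply: le_trans (ltW (decr m _)) (IHm _); lia.
Qed.
End Unimodal.

Lemma ler_scaled_exprS (R : realDomainType) (A B r1 r2 : R) m :
  0 <= B < A -> 0 < r1 -> 0 <= r2 -> A * r1 ^+ m <= B * r2 ^+ m -> A * r1 ^+ m.+1 <= B * r2 ^+ m.+1.
Proof.
case/andP=> B_ge0 lt_BA r1_gt0 r2_ge0 le_m.
have [le_r12|lt_r21] := leP r1 r2.
  rewrite !exprSr !mulrA; apply: le_trans (_ : B * r2 ^+ m * r1 <= _).
    by rewrite ler_wpM2r // ltW.
  by rewrite ler_wpM2l // mulr_ge0 ?exprn_ge0.
have r1m_gt0 : 0 < r1 ^+ m by exact: exprn_gt0.
have : r2 ^+ m <= r1 ^+ m.
  by apply: lerXn2r; rewrite ?nnegrE ?(ltW r1_gt0) ?(ltW lt_r21).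
by nra.
Qed.

Lemma four_var_bounds (R : realFieldType) (p : R) :
  0 <= p <= 1 -> p != 2^-1 -> 0 <= 4 * (p * (1 - p)) < 1.
Proof.
case/andP=> p_ge0 p_le1 p_ne; have : 0 < (p - 2^-1) ^+ 2 by rewrite exprn_even_gt0 //= subr_eq0.
rewrite expr2 => sq_gt0; apply/andP; split; last by nra.
by rewrite !mulr_ge0 // subr_ge0.
Qed.

Definition mixture_payoff (R : realFieldType) (a p1 p2 : R) (k : nat) : R :=
  (1 - a) * majority p1 k + a * majority p2 k.

Lemma P1_mixtureE (R : realType) (a p1 p2 : R) d (X : cube d) :
  P1 (mixture a p1 p2 (d:=d)) X (zero_pt d) = mixture_payoff a p1 p2 (hweight X).
Proof.
rewrite P1_zeroE /mixture_payoff /majority -!sum_bernoulli_cube_hinter !mulr_sumr -big_split.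
by apply: eq_bigr => Z _ /=; rewrite /mixture /bernoulli_cube; ring.
Qed.

Lemma majority0 (R : realFieldType) (p : R) : majority p 0 = 2^-1.
Proof. by rewrite /majority big_ord1 /binom_pmf /vote_share /= bin0 subnn !expr0 !mul1r. Qed.

Section MixturePayoff.
Variables (R : realFieldType) (a p1 p2 : R).
Local Notation payoff := (mixture_payoff a p1 p2).

Lemma mixture_payoff0 : payoff 0 = 2^-1.
Proof. by rewrite /mixture_payoff !majority0; ring. Qed.

Lemma mixture_payoff_odd m : payoff (2 * m).+1 = payoff (2 * m.+1).
Proof. by rewrite /mixture_payoff mulnS !majority_even. Qed.

Lemma mixture_payoff_half k : payoff k = payoff (2 * (k.+1 %/ 2)).
Proof.
have [m [->|->]] : exists m, k = (2 * m)%N \/ k = (2 * m).+1 by exists (k %/ 2)%N; lia.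
  by rewrite (_ : ((2 * m).+1 %/ 2 = m)%N) //; lia.
by rewrite mixture_payoff_odd (_ : ((2 * m).+2 %/ 2 = m.+1)%N) //; lia.
Qed.
End MixturePayoff.

Lemma norm_sqrt_lt1 (R : rcfType) (x : R) : 0 <= x < 1 -> `|Num.sqrt x| < 1.
Proof. by case/andP=> x_ge0 x_lt1; rewrite ger0_norm ?sqrtr_ge0 // -sqrtr1 ltr_sqrt. Qed.

Lemma expr_half_le_sqrt (R : rcfType) (x : R) d :
  0 <= x <= 1 -> x ^+ (d.+1 %/ 2) <= Num.sqrt x ^+ d.
Proof.
case/andP=> x_ge0 x_le1; rewrite -{1}(sqr_sqrtr x_ge0) -exprM.
by apply: ler_wiXn2l; [rewrite sqrtr_ge0 | rewrite -sqrtr1 ler_wsqrtr | lia].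
Qed.

Local Open Scope classical_set_scope.
Local Open Scope ring_scope.

Section MixtureGame.
Variables (R : realType) (a p1 p2 : R).
Hypotheses (a_gt0 : 0 < a) (a_lt1 : a < 1) (p1_gt0 : 0 < p1) (p1_lt : p1 < 2^-1)
  (p2_gt : 2^-1 < p2) (p2_lt1 : p2 < 1)
  (w0_gt_half : 2^-1 < (1 - a) * (1 - p1) + a * (1 - p2)).

#[local] Set Default Proof Using "All".
Local Notation payoff := (mixture_payoff a p1 p2).

Lemma mixture_coef_lt : a * (p2 - 2^-1) < (1 - a) * (2^-1 - p1).
Proof. by move: w0_gt_half; lra. Qed.

Lemma payoff_even_persist m :
  payoff (2 * m) <= payoff (2 * m.+1) -> payoff (2 * m.+1) <= payoff (2 * m.+2).
Proof.
have incrE n : payoff (2 * n.+1) - payoff (2 * n) = 'C(2 * n, n)%:R *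
    (a * (p2 - 2^-1) * (p2 * (1 - p2)) ^+ n - (1 - a) * (2^-1 - p1) * (p1 * (1 - p1)) ^+ n).
  rewrite -mixture_payoff_odd /mixture_payoff !majority_odd /binom_pmf !exprMn.
  by rewrite (_ : (2 * n - n = n)%N); [ring | lia].
have binom_gt0 n : 0 < 'C(2 * n, n)%:R :> R by rewrite ltr0n bin_gt0; lia.
have incr_sign n : (payoff (2 * n) <= payoff (2 * n.+1)) =
    ((1 - a) * (2^-1 - p1) * (p1 * (1 - p1)) ^+ n <= a * (p2 - 2^-1) * (p2 * (1 - p2)) ^+ n).
  by rewrite -subr_ge0 incrE pmulr_rge0 // subr_ge0.
rewrite !incr_sign; apply: ler_scaled_exprS.
- by apply/andP; split; [rewrite mulr_ge0 ?subr_ge0 ?ltW | exact: mixture_coef_lt].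
- by rewrite mulr_gt0 // subr_gt0; move: p1_lt; lra.
- by rewrite mulr_ge0 ?subr_ge0 ?ltW //; move: p2_gt; lra.
Qed.

Lemma payoff_le_endpoints k d : (k <= d)%N -> payoff k <= payoff 0 \/ payoff k <= payoff d.
Proof.
move=> le_kd; rewrite (mixture_payoff_half _ _ _ k) (mixture_payoff_half _ _ _ d).
rewrite -[in payoff 0](muln0 2).
by apply: (valley_le_endpoints (s := fun m => payoff (2 * m))); [exact: payoff_even_persist | lia].
Qed.

Lemma best_response_zero d : payoff d <= payoff 0 ->
  best_response (mixture a p1 p2 (d:=d)) (zero_pt d) (zero_pt d).
Proof.
move=> le_d0 X; rewrite !P1_mixtureE hweight_zero.
by have [|/le_trans->] := payoff_le_endpoints (hweight_le X).
Qed.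

Lemma best_response_one d : payoff 0 <= payoff d ->
  best_response (mixture a p1 p2 (d:=d)) (one_pt d) (zero_pt d).
Proof.
move=> le_0d X; rewrite !P1_mixtureE hweight_one.
by have [/le_trans->|] := payoff_le_endpoints (hweight_le X).
Qed.

Lemma var1_bounds : 0 <= 4 * (p1 * (1 - p1)) < 1.
Proof.
by apply: four_var_bounds; [apply/andP; split | rewrite lt_eqF]; move: p1_gt0 p1_lt; lra.
Qed.

Lemma var2_bounds : 0 <= 4 * (p2 * (1 - p2)) < 1.
Proof.
by apply: four_var_bounds; [apply/andP; split | rewrite gt_eqF]; move: p2_gt p2_lt1; lra.
Qed.

Let r1 : R := Num.sqrt (4 * (p1 * (1 - p1))).
Let r2 : R := Num.sqrt (4 * (p2 * (1 - p2))).

Lemma payoff_dist_le d : `|a - payoff d| <= r1 ^+ d + r2 ^+ d.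
Proof.
have p1_01 : 0 <= p1 <= 1 by apply/andP; split; move: p1_gt0 p1_lt; lra.
have p2_01 : 0 <= p2 <= 1 by apply/andP; split; move: p2_gt p2_lt1; lra.
rewrite mixture_payoff_half /mixture_payoff; set u := (d.+1 %/ 2)%N.
have M1_ge0 := majority_ge0 (2 * u) p1_01.
have M2_le1 := majority_le1 (2 * u) p2_01.
have M1_le : majority p1 (2 * u) <= r1 ^+ d.
  apply: le_trans (majority_even_le _ _) (expr_half_le_sqrt _ _).
    by apply/andP; split; move: p1_gt0 p1_lt; lra.
  by case/andP: var1_bounds => -> /ltW ->.
have M2_ge : 1 - majority p2 (2 * u) <= r2 ^+ d.
  apply: le_trans (majority_even_ge _ _) (expr_half_le_sqrt _ _).
    by apply/andP; split; move: p2_gt p2_lt1; lra.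
  by case/andP: var2_bounds => -> /ltW ->.
by move: a_gt0 a_lt1; rewrite ler_norml; nra.
Qed.

Lemma payoff_cvg : payoff @ \oo --> a.
Proof.
have r_cvg : (fun d => r1 ^+ d + r2 ^+ d) @ \oo --> (0 : R).
  rewrite -[0 : R]addr0; apply: cvgD; apply: cvg_expr; apply: norm_sqrt_lt1.
    exact: var1_bounds.
  exact: var2_bounds.
move/cvgr0Pnorm_le in r_cvg; apply/cvgrPdist_le => e /r_cvg; apply: filterS => d /= r_le.
exact: le_trans (payoff_dist_le d) (le_trans (ler_norm _) r_le).
Qed.
End MixtureGame.

Theorem mainTheorem12 (R : realType) (a p1 p2 : R)
  (ha0 : 0 < a) (ha1 : a < 1)
  (hp10 : 0 < p1) (hp1 : p1 < 2^-1) (hp2 : 2^-1 < p2) (hp21 : p2 < 1)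
  (hmaj : 2^-1 < (1 - a) * (1 - p1) + a * (1 - p2)) :
  (forall d : nat, (1 <= d)%N ->
     (best_response (mixture a p1 p2 (d:=d)) (zero_pt d) (zero_pt d)
      /\ equilibrium (mixture a p1 p2 (d:=d)) (zero_pt d) (zero_pt d))
     \/ best_response (mixture a p1 p2 (d:=d)) (one_pt d) (zero_pt d))
  /\ ((fun d : nat => P1 (mixture a p1 p2 (d:=d)) (one_pt d) (zero_pt d)) @ \oo --> a)
  /\ (2^-1 < a -> \forall d \near \oo,
        2^-1 < P1 (mixture a p1 p2 (d:=d)) (one_pt d) (zero_pt d)
        /\ ~ equilibrium (mixture a p1 p2 (d:=d)) (zero_pt d) (zero_pt d)
        /\ best_response (mixture a p1 p2 (d:=d)) (one_pt d) (zero_pt d))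
  /\ (a < 2^-1 -> \forall d \near \oo,
        equilibrium (mixture a p1 p2 (d:=d)) (zero_pt d) (zero_pt d)).
Proof.
have br_zero := best_response_zero ha0 ha1 hp10 hp1 hp2 hp21 hmaj.
have br_one := best_response_one ha0 ha1 hp10 hp1 hp2 hp21 hmaj.
have P1_oneE d : P1 (mixture a p1 p2 (d:=d)) (one_pt d) (zero_pt d) = mixture_payoff a p1 p2 d.
  by rewrite P1_mixtureE hweight_one.
have P1_cvg : (fun d => P1 (mixture a p1 p2 (d:=d)) (one_pt d) (zero_pt d)) @ \oo --> a.
  by under eq_fun do rewrite P1_oneE; exact: payoff_cvg.
split=> [d _|].
  have [le_d0|/ltW le_0d] := leP (mixture_payoff a p1 p2 d) (mixture_payoff a p1 p2 0).
    by left; split; [|apply: best_response_equilibrium]; exact: br_zero.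
  by right; exact: br_one.
split=> //; split=> [gt_a|lt_a].
  apply: filterS (cvgr_gt _ P1_cvg _ gt_a) => d; rewrite /= P1_oneE => gt_d; split=> //; split.
    case=> /(_ (one_pt d)); rewrite P1_oneE P1_mixtureE hweight_zero mixture_payoff0; lra.
  by apply: br_one; rewrite mixture_payoff0 ltW.
apply: filterS (cvgr_lt _ P1_cvg _ lt_a) => d; rewrite /= P1_oneE => lt_d.
by apply/best_response_equilibrium/br_zero; rewrite mixture_payoff0 ltW.
Qed.
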